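(* Let $N\ge 2$, $k=2$, $T=2$, and suppose $p_{11}\ge p_{01}$. Then for every initial belief vector $\omega(1)=(\omega_1,\dots,\omega_N)\in[0,1]^N$, the myopic sensing policy (with any tie-breaking) is optimal. That is, its expected total reward over the two slots equals the maximum expected total reward over the two slots achievable by any sensing policy.
   Context: Opportunistic spectrum access model. There are $N$ channels. The state $S_i(t)\in\{0,1\}$ of channel $i$ in slot $t$ (0 = busy, 1 = idle) evolves as a two-state discrete-time Markov chain with transition probabilities $p_{ij}=\Pr(S_i(t+1)=j\mid S_i(t)=i)$. The chains are independent across channels and all have the same transition probabilities $p_{01},p_{11}\in[0,1]$. The initial states are independent with $\Pr(S_i(1)=1)=\omega_i(1)$. In each slot $t=1,\dots,T$, a secondary user chooses a set $\mathcal{A}(t)$ of exactly $k$ channels to sense, based on past actions and observations. It observes the states of the sensed channels and obtains reward $1$ if at least one sensed channel is idle, and reward $0$ otherwise. The belief $\omega_i(t)$ is the conditional probability that $S_i(t)=1$ given past actions and observations. The expected immediate reward of action $\mathcal{A}(t)$ is $1-\prod_{i\in\mathcal{A}(t)}(1-\omega_i(t))$. Beliefs update as follows: $\omega_i(t+1)=p_{11}$ if $i\in\mathcal{A}(t)$ and $S_i(t)=1$; $\omega_i(t+1)=p_{01}$ if $i\in\mathcal{A}(t)$ and $S_i(t)=0$; and $\omega_i(t+1)=\tau(\omega_i(t))$ if $i\notin\mathcal{A}(t)$, where $\tau(\omega)=\omega p_{11}+(1-\omega)p_{01}$. A policy maps histories to actions. The objective is to maximize the expected total (equivalently, average) reward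 over slots $1,\dots,T$. The myopic sensing policy senses, in every slot, $k$ channels with the largest current beliefs $\omega_i(t)$, i.e. it maximizes the immediate expected reward. *)

From HB Require Import structures.
From mathcomp Require Import all_boot all_order all_algebra.
Set Implicit Arguments. Unset Strict Implicit. Unset Printing Implicit Defensive.
Import Order.TTheory GRing.Theory Num.Theory.
Local Open Scope ring_scope.

(* Channel states: a joint state of the N channels is S : {ffun 'I_N -> bool},
   with S i = true meaning "idle" (state 1) and false meaning "busy" (state 0). *)
Notation chstate N := {ffun 'I_N -> bool}.

Definition init_prob (R : realFieldType) (N : nat) (w : 'I_N -> R) (S : chstate N) : R :=
  \prod_(i < N) (if S i then w i else 1 - w i).

Definition trans1 (R : realFieldType) (p01 p11 : R) (a b : bool) : R :=
  if a then (if b then p11 else 1 - p11) else (if b then p01 else 1 - p01).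

Definition trans_prob (R : realFieldType) (N : nat) (p01 p11 : R) (S S' : chstate N) : R :=
  \prod_(i < N) trans1 p01 p11 (S i) (S' i).

Definition reward (R : realFieldType) (N : nat) (A : {set 'I_N}) (S : chstate N) : R :=
  if [exists i in A, S i] then 1 else 0.
Arguments reward {R N} A S.

Definition tau (R : realFieldType) (p01 p11 w : R) : R := w * p11 + (1 - w) * p01.

Definition belief_update (R : realFieldType) (N : nat) (p01 p11 : R) (w : 'I_N -> R)
    (A1 : {set 'I_N}) (S1 : chstate N) : 'I_N -> R :=
  fun i => if i \in A1 then (if S1 i then p11 else p01) else tau p01 p11 (w i).

(* A two-slot sensing policy: a slot-1 action A1 (the history is empty) and a
   slot-2 rule pi2 mapping the slot-1 state to an action, where pi2 may only
   depend on the observed part of the state (the states of channels in A1). *)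
Definition admissible_policy (N k : nat) (A1 : {set 'I_N})
    (pi2 : chstate N -> {set 'I_N}) : Prop :=
  #|A1| = k /\ (forall S : chstate N, #|pi2 S| = k) /\
  (forall S S' : chstate N, (forall i, i \in A1 -> S i = S' i) -> pi2 S = pi2 S').

Definition total_reward (R : realFieldType) (N : nat) (p01 p11 : R) (w : 'I_N -> R)
    (A1 : {set 'I_N}) (pi2 : chstate N -> {set 'I_N}) : R :=
  \sum_(S1 : chstate N) \sum_(S2 : chstate N)
     init_prob w S1 * trans_prob p01 p11 S1 S2 * (reward A1 S1 + reward (pi2 S1) S2).

Definition myopic_action (R : realFieldType) (N k : nat) (w : 'I_N -> R) (A : {set 'I_N}) : Prop :=
  #|A| = k /\ (forall i j, i \in A -> j \notin A -> w j <= w i).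

Definition myopic_policy (R : realFieldType) (N k : nat) (p01 p11 : R) (w : 'I_N -> R)
    (A1 : {set 'I_N}) (pi2 : chstate N -> {set 'I_N}) : Prop :=
  myopic_action k w A1 /\
  (forall S : chstate N, myopic_action k (belief_update p01 p11 w A1 S) (pi2 S)).

From HB Require Import structures.
From mathcomp Require Import all_boot all_order all_algebra.
From mathcomp Require Import ring lra.

(* Whatever is sensed in slot 1, the slot-2 reward is maximised, for each
   observation, by sensing the pair of channels with the smallest product of
   busy probabilities, which is what the myopic rule does; so every first
   action B has an optimal value 2 - opt_loss B.  When B = {i, j}, all other
   channels enter opt_loss only through the smallest busy probability r and
   the smallest product p of two busy probabilities among them, padded with
   the largest value 1 - p01.  Replacing j by a channel m with w j <= w m then
   cannot increase opt_loss: this is an explicit polynomial inequality in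
   w i, w j, w m, r, p, where p11 >= p01 is used.  Two such exchanges turn any
   first action into the myopic one. *)

Set Implicit Arguments. Unset Strict Implicit. Unset Printing Implicit Defensive.
Import Order.TTheory GRing.Theory Num.Theory.
Local Open Scope ring_scope.

Lemma bigmin_attained (disp : Order.disp_t) (T : orderType disp) (I : finType) (x : T)
    (P : pred I) (F : I -> T) :
  \big[Order.min/x]_(i | P i) F i = x \/ exists2 i, P i & \big[Order.min/x]_(i | P i) F i = F i.
Proof.
apply: (big_ind (fun v => v = x \/ exists2 i, P i & v = F i)); [by left | | by right; exists i].
by move=> u v u_att v_att; rewrite minEle; case: ifP.
Qed.

Lemma card2_mem (T : finType) (A : {set T}) (c : T) : #|A| = 2 -> c \in A ->
  exists2 a, c != a & A = [set c; a].
Proof.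
move=> /eqP/cards2P[x [y [xy ->]]]; rewrite !inE => /orP[]/eqP->.
  by exists y.
by exists x; rewrite 1?eq_sym // setUC.
Qed.

Lemma prod_set2 (R : comPzSemiRingType) (T : finType) (F : T -> R) c d : c != d ->
  \prod_(l in [set c; d]) F l = F c * F d.
Proof. by move=> cd; rewrite big_setU1 ?big_set1 // inE. Qed.

Lemma prod_indicator (R : comPzSemiRingType) (I : finType) (P : pred I) :
  \prod_i (P i)%:R = [forall i, P i]%:R :> R.
Proof.
case: forallP => [allP | notall]; first by apply: big1 => i _; rewrite allP.
have [i /negbTE notPi] : exists i, ~~ P i.
  by apply/existsP; rewrite -negb_forall; apply/forallP.
by rewrite (bigD1 i) //= notPi mul0r.
Qed.

Lemma sum_ffun_prod (R : comPzSemiRingType) (I : finType) (F : I -> bool -> R) :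
  \sum_(S : {ffun I -> bool}) \prod_i F i (S i) = \prod_i (F i true + F i false).
Proof. by rewrite -bigA_distr_bigA; apply: eq_bigr => i _; rewrite big_bool. Qed.

Section ProductDistribution.
Variables (R : realFieldType) (N : nat).

Lemma rewardE (A : {set 'I_N}) (S : chstate N) :
  reward A S = 1 - \prod_(i in A) (~~ S i)%:R :> R.
Proof.
rewrite /reward; case: existsP => [[i /andP[iA Si]]|noidle].
  by rewrite (bigD1 i) //= Si mul0r subr0.
rewrite big1 ?subrr // => i iA; case: (boolP (S i)) => // Si.
by case: noidle; exists i; rewrite iA.
Qed.

Variable q : 'I_N -> bool -> R.
Hypothesis q_sum1 : forall i, q i true + q i false = 1.

Lemma sum_prod_distr : \sum_(S : chstate N) \prod_i q i (S i) = 1.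
Proof. by rewrite sum_ffun_prod big1. Qed.

Lemma expected_reward (C : {set 'I_N}) :
  \sum_(S : chstate N) (\prod_i q i (S i)) * reward C S = 1 - \prod_(i in C) q i false.
Proof.
rewrite (eq_bigr (fun S : chstate N => \prod_i q i (S i) -
    \prod_i (q i (S i) * (if i \in C then (~~ S i)%:R else 1)))); last first.
  by move=> S _; rewrite rewardE mulrBr mulr1 big_split /= -big_mkcond.
rewrite sumrB sum_prod_distr [in RHS]big_mkcond /=; congr (_ - _).
rewrite (sum_ffun_prod (fun i b => q i b * (if i \in C then (~~ b)%:R else 1))).
by apply: eq_bigr => i _; case: (i \in C); rewrite /= ?mulr1 ?mulr0 ?add0r.
Qed.

End ProductDistribution.

Section SlotTwoLoss.
Variables (R : realFieldType) (N : nat) (p01 p11 : R) (w : 'I_N -> R).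

Definition bern (x : R) (b : bool) := if b then x else 1 - x.

Lemma bern_ge0 (x : R) b : 0 <= x <= 1 -> 0 <= bern x b.
Proof. by case/andP=> x0 x1; case: b; rewrite /bern ?subr_ge0. Qed.

Lemma bern_sum1 x : bern x true + bern x false = 1.
Proof. by rewrite /bern addrC subrK. Qed.

Lemma trans1_sum1 a : trans1 p01 p11 a true + trans1 p01 p11 a false = 1.
Proof. by rewrite /trans1; case: a; rewrite addrC subrK. Qed.

Definition restrict (B : {set 'I_N}) (S : chstate N) : chstate N :=
  [ffun l => (l \in B) && S l].

Lemma restrictK B S : restrict B (restrict B S) = restrict B S.
Proof. by apply/ffunP => l; rewrite !ffunE andbA andbb. Qed.

Lemma restrict_eqE B S T : restrict B T = T ->
  (restrict B S == T) = [forall l, (l \in B) ==> (S l == T l)].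
Proof.
move=> TB; apply/idP/idP => [/eqP <- | /forallP agree].
  by apply/forallP => l; rewrite ffunE; case: (l \in B) => /=.
apply/eqP/ffunP => l; rewrite -TB !ffunE; case lB: (l \in B) => //=.
exact/eqP/(implyP (agree l)).
Qed.

Definition busy (B : {set 'I_N}) (T : chstate N) (l : 'I_N) : R :=
  1 - belief_update p01 p11 w B T l.

Definition slot2_loss (B : {set 'I_N}) (sigma : chstate N -> {set 'I_N}) : R :=
  \sum_(S : chstate N) init_prob w S * \prod_(l in sigma S) trans1 p01 p11 (S l) false.

Lemma sum_init_prob : \sum_(S : chstate N) init_prob w S = 1.
Proof. exact: (sum_prod_distr (q := fun i => bern (w i))) (fun i => bern_sum1 (w i)). Qed.

Lemma expected_init_reward (B : {set 'I_N}) :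
  \sum_(S : chstate N) init_prob w S * reward B S = 1 - \prod_(i in B) (1 - w i).
Proof. by have := expected_reward (q := fun i => bern (w i)) (fun i => bern_sum1 (w i)) B. Qed.

Lemma sum_trans_prob (S1 : chstate N) : \sum_(S2 : chstate N) trans_prob p01 p11 S1 S2 = 1.
Proof.
exact: (sum_prod_distr (q := fun i => trans1 p01 p11 (S1 i))) (fun i => trans1_sum1 (S1 i)).
Qed.

Lemma expected_trans_reward (S1 : chstate N) (C : {set 'I_N}) :
  \sum_(S2 : chstate N) trans_prob p01 p11 S1 S2 * reward C S2
  = 1 - \prod_(l in C) trans1 p01 p11 (S1 l) false.
Proof.
by have := expected_reward (q := fun i => trans1 p01 p11 (S1 i)) (fun i => trans1_sum1 (S1 i)) C.
Qed.

Lemma total_rewardE (B : {set 'I_N}) (sigma : chstate N -> {set 'I_N}) :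
  total_reward p01 p11 w B sigma = (1 - \prod_(i in B) (1 - w i)) + (1 - slot2_loss B sigma).
Proof.
rewrite /total_reward (eq_bigr (fun S => init_prob w S * reward B S +
    init_prob w S * (1 - \prod_(l in sigma S) trans1 p01 p11 (S l) false))); last first.
  move=> S _; rewrite -expected_trans_reward -[in RHS](mulr1 (reward B S)).
  rewrite -[1 in RHS](sum_trans_prob S) [in RHS]mulr_sumr -mulrDr -big_split mulr_sumr.
  by apply: eq_bigr => S2 _ /=; ring.
rewrite big_split /= expected_init_reward -[X in _ + (X - _)]sum_init_prob /slot2_loss -sumrB.
by congr (_ + _); apply: eq_bigr => S _; rewrite mulrBr mulr1.
Qed.

Lemma sum_restrict_eq (B : {set 'I_N}) (T : chstate N) (C : {set 'I_N}) : restrict B T = T ->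
  \sum_(S | restrict B S == T) init_prob w S * \prod_(l in C) trans1 p01 p11 (S l) false
  = (\prod_(i in B) bern (w i) (T i)) * \prod_(l in C) busy B T l.
Proof.
move=> TB; pose F i b := bern (w i) b * ((i \in B) ==> (b == T i))%:R *
  (if i \in C then trans1 p01 p11 b false else 1).
transitivity (\sum_(S : chstate N) \prod_i F i (S i)).
  rewrite big_mkcond; apply: eq_bigr => S _.
  rewrite /F !big_split /= -big_mkcond prod_indicator -(restrict_eqE _ TB).
  by case: (restrict B S == T); rewrite ?mulr1 ?mulr0 ?mul0r.
rewrite sum_ffun_prod [in RHS]big_mkcond [X in _ * X]big_mkcond -big_split /=.
apply: eq_bigr => i _; rewrite /F /busy /belief_update /tau /bern /trans1.
case: (i \in B); case: (i \in C); case: (T i) => /=; ring.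
Qed.

Lemma slot2_lossE (B : {set 'I_N}) (sigma : chstate N -> {set 'I_N}) :
  (forall S S' : chstate N, (forall i, i \in B -> S i = S' i) -> sigma S = sigma S') ->
  slot2_loss B sigma = \sum_(T | restrict B T == T)
    (\prod_(i in B) bern (w i) (T i)) * \prod_(l in sigma T) busy B T l.
Proof.
move=> sigmaB; rewrite /slot2_loss (partition_big (restrict B) (fun T => restrict B T == T)) /=;
  last by move=> S _; rewrite restrictK.
apply: eq_bigr => T /eqP TB; rewrite -sum_restrict_eq //; apply: eq_bigr => S /eqP <-.
by rewrite (sigmaB (restrict B S) S) // => i iB; rewrite ffunE iB.
Qed.

End SlotTwoLoss.

Section MinProduct.
Variables (R : realFieldType) (N : nat).

(* The neutral element 1 of the minimum is harmless, as [u] will always be a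
   vector of probabilities. *)
Definition min_prod (k : nat) (u : 'I_N -> R) : R :=
  \big[Num.min/1]_(D : {set 'I_N} | #|D| == k) \prod_(l in D) u l.

Lemma min_prod_le k u (D : {set 'I_N}) : #|D| = k -> min_prod k u <= \prod_(l in D) u l.
Proof. by move=> Dk; apply: bigmin_le_cond; rewrite Dk. Qed.

Lemma le_min_prod k u (z : R) : z <= 1 ->
  (forall D : {set 'I_N}, #|D| = k -> z <= \prod_(l in D) u l) -> z <= min_prod k u.
Proof. by move=> z1 zD; apply: le_bigmin => // D /eqP; exact: zD. Qed.

Lemma prod_le_prod_card (u : 'I_N -> R) (X Y : {set 'I_N}) : (forall l, 0 <= u l) ->
  #|X| = #|Y| -> (forall x y, x \in X -> y \in Y -> u x <= u y) ->
  \prod_(l in X) u l <= \prod_(l in Y) u l.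
Proof.
move=> u_ge0; move: {2}#|X| (erefl #|X|) => n; elim: n X Y => [|n IH] X Y Xn XY uXY.
  have -> : X = set0 by exact: cards0_eq.
  by have -> : Y = set0 by apply: cards0_eq; rewrite -XY.
have [x xX] : exists x, x \in X by apply/set0Pn; rewrite -card_gt0 Xn.
have [y yY] : exists y, y \in Y by apply/set0Pn; rewrite -card_gt0 -XY Xn.
rewrite (big_setD1 x xX) (big_setD1 y yY) /=.
apply: ler_pM; rewrite ?u_ge0 ?prodr_ge0 ?uXY //; apply: IH.
- by move: Xn; rewrite (cardsD1 x) xX => -[].
- by move: XY; rewrite (cardsD1 x) (cardsD1 y Y) xX yY => -[].
- by move=> x' y'; rewrite !in_setD1 => /andP[_ x'X] /andP[_ y'Y]; exact: uXY.
Qed.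

Lemma myopic_prod_le k (b : 'I_N -> R) (A D : {set 'I_N}) : myopic_action k b A ->
  #|D| = k -> (forall l, b l <= 1) -> \prod_(l in A) (1 - b l) <= \prod_(l in D) (1 - b l).
Proof.
move=> [Ak b_myopic] Dk b_le1.
rewrite (big_setID D) [in leRHS](big_setID A) /= setIC.
apply: ler_wpM2l; first by apply: prodr_ge0 => l _; rewrite subr_ge0.
apply: prod_le_prod_card => [l||x y]; first by rewrite subr_ge0.
  by apply/eqP; rewrite -(eqn_add2l #|A :&: D|) {2}setIC !cardsID Ak Dk.
rewrite !inE => /andP[xD xA] /andP[yA yD]; rewrite lerB //; exact: b_myopic.
Qed.

Lemma myopic_le_min_prod k (b : 'I_N -> R) (A : {set 'I_N}) : myopic_action k b A ->
  (forall l, 0 <= b l <= 1) -> \prod_(l in A) (1 - b l) <= min_prod k (fun l => 1 - b l).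
Proof.
move=> myopic b01; apply: le_min_prod => [|D Dk].
  by apply: prodr_ile1 => l _; case/andP: (b01 l) => bl0 bl1; rewrite subr_ge0 bl1 gerBl.
by apply: (myopic_prod_le myopic Dk) => l; case/andP: (b01 l).
Qed.

Lemma le_min_prod_homo k (u v : 'I_N -> R) : (forall l, 0 <= u l <= v l) ->
  min_prod k u <= min_prod k v.
Proof. by move=> uv; apply: le_bigmin2 => D _; exact: ler_prod. Qed.

Lemma min_prod2_le (u : 'I_N -> R) c d : c != d -> min_prod 2 u <= u c * u d.
Proof.
move=> cd; have cd2 : #|[set c; d]| = 2 by rewrite cards2 cd.
by apply: le_trans (min_prod_le u cd2) _; rewrite prod_set2.
Qed.

Lemma le_min_prod2 (u : 'I_N -> R) (z : R) : z <= 1 ->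
  (forall c d, c != d -> z <= u c * u d) -> z <= min_prod 2 u.
Proof.
move=> z1 zcd; apply: le_min_prod => // D /eqP/cards2P[c [d [cd ->]]].
by rewrite prod_set2 //; exact: zcd.
Qed.

Lemma le_min_prod2_mul (u : 'I_N -> R) (a b : R) c0 : 0 <= a -> a <= b -> a * b <= 1 ->
  (forall l, a <= u l) -> (forall l, l != c0 -> b <= u l) -> a * b <= min_prod 2 u.
Proof.
move=> a0 ab ab1 a_le b_le; apply: le_min_prod2 => // c d cd.
have b0 := le_trans a0 ab.
case: (eqVneq c c0) => [cc0 | /b_le bc]; last by rewrite mulrC ler_pM.
by rewrite ler_pM // b_le // -cc0 eq_sym.
Qed.

End MinProduct.

Section OptimalLoss.
Variables (R : realFieldType) (N : nat) (p01 p11 : R) (w : 'I_N -> R).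
Hypothesis w01 : forall i, 0 <= w i <= 1.

Definition opt_slot2_loss (k : nat) (B : {set 'I_N}) : R :=
  \sum_(T | restrict B T == T)
    (\prod_(i in B) bern (w i) (T i)) * min_prod k (busy p01 p11 w B T).

(* [2 - opt_loss k B] is the largest expected total reward of a policy that
   senses [B] in slot 1. *)
Definition opt_loss (k : nat) (B : {set 'I_N}) : R :=
  \prod_(i in B) (1 - w i) + opt_slot2_loss k B.

Lemma bern_prod_ge0 (B : {set 'I_N}) (T : chstate N) : 0 <= \prod_(i in B) bern (w i) (T i).
Proof. by apply: prodr_ge0 => i _; exact: bern_ge0. Qed.

Lemma opt_slot2_loss_le k (B : {set 'I_N}) (sigma : chstate N -> {set 'I_N}) :
  admissible_policy k B sigma -> opt_slot2_loss k B <= slot2_loss p01 p11 w B sigma.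
Proof.
case=> _ [sigma_k sigma_obs]; rewrite (slot2_lossE _ _ _ sigma_obs).
by apply: ler_sum => T _; apply: ler_wpM2l; [exact: bern_prod_ge0 | exact: min_prod_le].
Qed.

Lemma total_reward_le_opt_loss k (B : {set 'I_N}) (sigma : chstate N -> {set 'I_N}) :
  admissible_policy k B sigma -> total_reward p01 p11 w B sigma <= 2 - opt_loss k B.
Proof. by move=> /opt_slot2_loss_le; rewrite total_rewardE /opt_loss; lra. Qed.

Lemma belief_update01 (A : {set 'I_N}) (S : chstate N) l :
  0 <= p01 <= 1 -> 0 <= p11 <= 1 -> 0 <= belief_update p01 p11 w A S l <= 1.
Proof.
move=> /andP[p01_ge0 p01_le1] /andP[p11_ge0 p11_le1]; case/andP: (w01 l) => wl0 wl1.
rewrite /belief_update /tau; case: (l \in A); first by case: (S l); apply/andP.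
by apply/andP; split; nra.
Qed.

Lemma myopic_slot2_loss k (A : {set 'I_N}) (pi : chstate N -> {set 'I_N}) :
  0 <= p01 <= 1 -> 0 <= p11 <= 1 ->
  admissible_policy k A pi -> myopic_policy k p01 p11 w A pi ->
  slot2_loss p01 p11 w A pi <= opt_slot2_loss k A.
Proof.
move=> p01_01 p11_01 [_ [_ pi_obs]] [_ pi_myopic]; rewrite (slot2_lossE _ _ _ pi_obs).
apply: ler_sum => T _; apply: ler_wpM2l; first exact: bern_prod_ge0.
by apply: myopic_le_min_prod => // l; exact: belief_update01.
Qed.

Lemma myopic_total_reward_ge k (A : {set 'I_N}) (pi : chstate N -> {set 'I_N}) :
  0 <= p01 <= 1 -> 0 <= p11 <= 1 ->
  admissible_policy k A pi -> myopic_policy k p01 p11 w A pi ->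
  2 - opt_loss k A <= total_reward p01 p11 w A pi.
Proof.
move=> p01_01 p11_01 A_adm A_myopic.
by have := myopic_slot2_loss p01_01 p11_01 A_adm A_myopic; rewrite total_rewardE /opt_loss; lra.
Qed.

End OptimalLoss.

Section ExchangeInequality.
Variables (R : realFieldType) (e f : R).

(* [e] and [f] play the roles of the busy probabilities 1 - p11 and 1 - p01
   after an idle, resp. busy, slot; [mix x] is that of an unobserved channel
   of belief [x]. *)

Definition mix (x : R) : R := x * e + (1 - x) * f.

Lemma mix_bounds x : e <= f -> 0 <= x <= 1 -> e <= mix x <= f.
Proof. by rewrite /mix => ef /andP[x0 x1]; apply/andP; split; nra. Qed.

Definition outcome_loss (s t : bool) (r q : R) : R :=
  if s && t then e * e else if s || t then e * r else q.

Definition pair_loss (a x r q : R) : R :=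
  (1 - a) * (1 - x) + \sum_(s : bool) \sum_(t : bool) bern a s * bern x t * outcome_loss s t r q.

Lemma exchange_gain_single (a x y r rj rm : R) : 0 <= e -> e <= f -> f <= 1 ->
  0 <= a <= 1 -> 0 <= x -> x <= y -> y <= 1 -> e <= r -> r <= f ->
  rj = mix y \/ rj = r -> rm <= mix x -> rm <= r ->
  0 <= (1 - a) * (y - x) + a * e * ((x - y) * e + (1 - x) * rj - (1 - y) * rm)
       + (1 - a) * e * (x * rj - y * rm).
Proof.
move=> e0 ef f1 /andP[a0 a1] x0 xy y1 er rf [|] -> rmx rmr; rewrite /mix in rmx *;
  have w0 : 0 <= a * (1 - y) + (1 - a) * y by nra.
  have ef1 : e * f <= 1 by nra.
  have h1 : 0 <= (1 - a) * ((y - x) * (1 - e * f)) by apply: mulr_ge0; nra.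
  have h2 : 0 <= e * ((a * (1 - y) + (1 - a) * y) * (x * e + (1 - x) * f - rm)).
    by apply: mulr_ge0; nra.
  lra.
have er1 : e * r <= 1 by nra.
have h1 : 0 <= a * e * ((y - x) * (r - e)) by apply: mulr_ge0; nra.
have h2 : 0 <= (1 - a) * ((y - x) * (1 - e * r)) by apply: mulr_ge0; nra.
have h3 : 0 <= e * ((a * (1 - y) + (1 - a) * y) * (r - rm)) by apply: mulr_ge0; nra.
lra.
Qed.

Lemma exchange_gain_pair (x y r p qj qm : R) : 0 <= e ->
  0 <= x -> x <= y -> y <= 1 -> 0 <= r -> 0 <= p ->
  qj = mix y * r \/ qj = p -> qm <= mix x * r -> qm <= p ->
  0 <= (1 - x) * qj - (1 - y) * qm.
Proof.
move=> e0 x0 xy y1 r0 p0 [|] -> qmx qmp; rewrite /mix in qmx *.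
  have h1 : 0 <= r * (e * (y - x)) by apply: mulr_ge0; nra.
  have h2 : 0 <= (1 - y) * ((x * e + (1 - x) * f) * r - qm) by apply: mulr_ge0; lra.
  lra.
have h1 : 0 <= (y - x) * p by apply: mulr_ge0; lra.
have h2 : 0 <= (1 - y) * (p - qm) by apply: mulr_ge0; lra.
lra.
Qed.

Lemma pair_loss_exchange (a x y r p : R) : 0 <= e -> e <= f -> f <= 1 ->
  0 <= a <= 1 -> 0 <= x -> x <= y -> y <= 1 -> e <= r -> r <= f -> 0 <= p ->
  pair_loss a y (Num.min (mix x) r) (Num.min (mix x * r) p)
  <= pair_loss a x (Num.min (mix y) r) (Num.min (mix y * r) p).
Proof.
move=> e0 ef f1 a01 x0 xy y1 er rf p0.
have min_cases (u v : R) : Num.min u v = u \/ Num.min u v = v.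
  by rewrite minEle; case: ifP; [left | right].
have min_le_l (u v : R) : Num.min u v <= u by rewrite ge_min lexx.
have min_le_r (u v : R) : Num.min u v <= v by rewrite ge_min lexx orbT.
have gain_single := exchange_gain_single e0 ef f1 a01 x0 xy y1 er rf (min_cases _ _)
  (min_le_l _ _) (min_le_r (mix x) r).
have gain_pair := exchange_gain_pair e0 x0 xy y1 (le_trans e0 er) p0 (min_cases _ _)
  (min_le_l _ _) (min_le_r (mix x * r) p).
have [_ a1] := andP a01; have a1' : 0 <= 1 - a by rewrite subr_ge0.
have := mulr_ge0 a1' gain_pair.
(* The difference of the two losses is [gain_single + (1 - a) * gain_pair]. *)
rewrite /pair_loss !big_bool /outcome_loss /bern /=; lra.
Qed.

End ExchangeInequality.

Section PairLoss.
Variables (R : realFieldType) (N : nat) (p01 p11 : R) (w : 'I_N -> R).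

Definition pair_state (c d : 'I_N) (s t : bool) : chstate N :=
  [ffun l => if l == c then s else if l == d then t else false].

Lemma sum_restrict_pair (F : chstate N -> R) c d : c != d ->
  \sum_(T | restrict [set c; d] T == T) F T
  = \sum_(s : bool) \sum_(t : bool) F (pair_state c d s t).
Proof.
move=> cd; rewrite pair_big.
rewrite (reindex_onto (fun st => pair_state c d st.1 st.2) (fun T => (T c, T d))).
  apply: eq_bigl => -[s t]; rewrite /= !ffunE [d == c]eq_sym (negbTE cd) !eqxx andbT.
  apply/eqP/ffunP => l; rewrite !ffunE !inE.
  by case: (eqVneq l c) => //= _; case: (l == d).
move=> T /eqP TB; apply/ffunP => l; rewrite /= !ffunE.
have := congr1 (fun T : chstate N => T l) TB; rewrite /= ffunE !inE => <-.
by case: (eqVneq l c) => [->|_] //=; case: (eqVneq l d) => [->|].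
Qed.

Lemma busy_pair c d s t l : c != d -> busy p01 p11 w [set c; d] (pair_state c d s t) l =
  if l == c then (if s then 1 - p11 else 1 - p01)
  else if l == d then (if t then 1 - p11 else 1 - p01) else mix (1 - p11) (1 - p01) (w l).
Proof.
move=> cd; rewrite /busy /belief_update /tau /mix !inE !ffunE.
case: (eqVneq l c) => [->|lc] /=; first by case: s.
by case: (l == d) => /=; [case: t | ring].
Qed.

Lemma opt_loss_pair c d : c != d -> opt_loss p01 p11 w 2 [set c; d] =
  (1 - w c) * (1 - w d) + \sum_(s : bool) \sum_(t : bool)
    bern (w c) s * bern (w d) t * min_prod 2 (busy p01 p11 w [set c; d] (pair_state c d s t)).
Proof.
move=> cd; rewrite /opt_loss /opt_slot2_loss prod_set2 // sum_restrict_pair //; congr (_ + _).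
apply: eq_bigr => s _; apply: eq_bigr => t _; rewrite prod_set2 // !ffunE eqxx.
by rewrite eq_sym (negbTE cd) eqxx.
Qed.

End PairLoss.

Section PairExchange.
Variables (R : realFieldType) (N : nat) (p01 p11 : R) (w : 'I_N -> R).
Hypotheses (p01_ge0 : 0 <= p01) (p01_le_p11 : p01 <= p11) (p11_le1 : p11 <= 1).
Hypothesis w01 : forall l, 0 <= w l <= 1.
Variables i j m : 'I_N.
Hypotheses (ij : i != j) (im : i != m) (jm : j != m) (wjm : w j <= w m).

Local Notation e := (1 - p11).
Local Notation f := (1 - p01).
Local Notation busy_next x := (mix (1 - p11) (1 - p01) x).

Let e_ge0 : 0 <= e. Proof. by rewrite subr_ge0. Qed.
Let e_le_f : e <= f. Proof. by rewrite lerB. Qed.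
Let f_le1 : f <= 1. Proof. by rewrite gerBl. Qed.

Let busy_next_bounds l : e <= busy_next (w l) <= f.
Proof. exact: mix_bounds e_le_f (w01 l). Qed.

(* The channels i, j, m are padded with the largest busy probability [f], so
   that [rest_min] and [min_prod 2 padded] do not depend on which of j and m
   was sensed. *)
Definition rest_min : R := \big[Num.min/f]_(l | l \notin [set i; j; m]) busy_next (w l).

Definition padded (l : 'I_N) : R := if l \in [set i; j; m] then f else busy_next (w l).

Lemma rest_min_le l : l \notin [set i; j; m] -> rest_min <= busy_next (w l).
Proof. by move=> l_rest; rewrite /rest_min; apply: bigmin_le_cond. Qed.

Lemma rest_min_bounds : e <= rest_min <= f.
Proof.
rewrite /rest_min bigmin_le_id andbT; apply: le_bigmin => // l _.
by case/andP: (busy_next_bounds l).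
Qed.

Lemma rest_min_le_padded l : rest_min <= padded l.
Proof.
rewrite /padded; case: ifPn => [_ | /rest_min_le //].
by case/andP: rest_min_bounds.
Qed.

Lemma min_prod_le_rest_min (v : 'I_N -> R) c0 c1 :
  c0 \in [set i; j; m] -> c0 != c1 -> v c1 <= f -> (forall l, 0 <= v l) ->
  (forall l, l \notin [set i; j; m] -> v l <= busy_next (w l)) ->
  min_prod 2 v <= v c0 * rest_min.
Proof.
move=> c0_in c01 vc1 v_ge0 v_rest; rewrite /rest_min.
case: (bigmin_attained f (fun l => l \notin [set i; j; m]) (fun l => busy_next (w l)))
  => [-> | [l l_rest ->]].
  by apply: le_trans (min_prod2_le v c01) _; rewrite ler_wpM2l.
have c0l : c0 != l by apply: contraNneq l_rest => <-.
by apply: le_trans (min_prod2_le v c0l) _; rewrite ler_wpM2l ?v_rest.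
Qed.

Lemma busy_pair_bounds c d s t l : c != d ->
  e <= busy p01 p11 w [set c; d] (pair_state c d s t) l <= f.
Proof.
move=> cd; rewrite busy_pair //; case: ifP => _; first by case: s; rewrite lexx e_le_f.
by case: ifP => _; [case: t; rewrite lexx e_le_f | exact: busy_next_bounds].
Qed.

Lemma le_min_prod_both_busy_ij :
  Num.min (busy_next (w m) * rest_min) (min_prod 2 padded)
  <= min_prod 2 (busy p01 p11 w [set i; j] (pair_state i j false false)).
Proof.
set u := busy _ _ _ _ _.
have u_pad l : l != m -> u l = padded l.
  move=> lm; rewrite /u busy_pair // /padded !inE (negbTE lm) orbF.
  by case: (l == i) => //=; case: (l == j).
have um : u m = busy_next (w m).
  by rewrite /u busy_pair // eq_sym (negbTE im) eq_sym (negbTE jm).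
have r_le_u l : l != m -> rest_min <= u l by move=> lm; rewrite u_pad // rest_min_le_padded.
have bm0 : 0 <= busy_next (w m) by case/andP: (busy_next_bounds m) => /(le_trans e_ge0).
have p_le1 : min_prod 2 padded <= 1 by exact: bigmin_le_id.
apply: le_min_prod2 => [|c d cd]; first by rewrite ge_min p_le1 orbT.
case: (eqVneq c m) => [cm | cm].
  by move: cd; rewrite cm eq_sym => /r_le_u/(ler_wpM2l bm0); rewrite ge_min um => ->.
case: (eqVneq d m) => [dm | dm].
  by move: cd; rewrite dm => /r_le_u/(ler_wpM2l bm0); rewrite ge_min um [u c * _]mulrC => ->.
by rewrite ge_min !u_pad // min_prod2_le ?orbT.
Qed.

Lemma le_min_prod_sensed_ij s t :
  outcome_loss e s t (Num.min (busy_next (w m)) rest_min)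
    (Num.min (busy_next (w m) * rest_min) (min_prod 2 padded))
  <= min_prod 2 (busy p01 p11 w [set i; j] (pair_state i j s t)).
Proof.
case: (boolP (s || t)) => [st | /norP[/negbTE-> /negbTE->]]; last exact: le_min_prod_both_busy_ij.
set u := busy _ _ _ _ _; set rho := Num.min _ rest_min.
have [r_ge r_le] := andP rest_min_bounds.
have [bm_ge bm_le] := andP (busy_next_bounds m).
have rho_ge : e <= rho by rewrite le_min bm_ge r_ge.
have rho_le : rho <= f by rewrite ge_min r_le orbT.
have e_le1 : e <= 1 := le_trans e_le_f f_le1.
have e_rho1 : e * rho <= 1.
  by rewrite mulr_ile1 ?(le_trans e_ge0 rho_ge) ?(le_trans rho_le f_le1).
have u_ge l : e <= u l by case/andP: (busy_pair_bounds s t l ij).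
have uE l : u l = if l == i then (if s then e else f)
    else if l == j then (if t then e else f) else busy_next (w l) by rewrite /u busy_pair.
clearbody u.
have u_unsensed l : l != i -> l != j -> rho <= u l.
  move=> li lj; rewrite uE (negbTE li) (negbTE lj).
  case: (eqVneq l m) => [-> | lm]; first by rewrite ge_min lexx.
  by rewrite ge_min rest_min_le ?orbT // !inE (negbTE li) (negbTE lj) (negbTE lm).
case: s t st uE => [] [] // _ uE; rewrite /outcome_loss /=.
- by apply: (le_min_prod2_mul (c0 := i)); rewrite // mulr_ile1.
- apply: (le_min_prod2_mul (c0 := i)) => // l li.
  by case: (eqVneq l j) => [-> | lj]; [rewrite uE eq_sym (negbTE ij) eqxx | exact: u_unsensed].
apply: (le_min_prod2_mul (c0 := j)) => // l lj.
by case: (eqVneq l i) => [-> | li]; [rewrite uE eqxx | exact: u_unsensed].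
Qed.

Lemma min_prod_both_busy_im_le :
  min_prod 2 (busy p01 p11 w [set i; m] (pair_state i m false false))
  <= Num.min (busy_next (w j) * rest_min) (min_prod 2 padded).
Proof.
set v := busy _ _ _ _ _.
have vE l : v l = if (l == i) || (l == m) then f else busy_next (w l).
  by rewrite /v busy_pair //; case: (l == i); case: (l == m).
have v_ge0 l : 0 <= v l by case/andP: (busy_pair_bounds false false l im) => /(le_trans e_ge0).
have v_le_padded l : 0 <= v l <= padded l.
  rewrite v_ge0 vE /padded !inE; case: (l == i); case: (l == m); case: (l == j);
    by rewrite /= ?lexx //; case/andP: (busy_next_bounds l).
rewrite le_min le_min_prod_homo // andbT.
have <- : v j = busy_next (w j) by rewrite vE eq_sym (negbTE ij) (negbTE jm).
apply: (min_prod_le_rest_min (c1 := i)); rewrite ?inE ?eqxx ?orbT // 1?eq_sym //.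
- by rewrite vE eqxx.
- by move=> l; rewrite !inE vE => /norP[/norP[/negbTE-> _] /negbTE->].
Qed.

Lemma min_prod_sensed_im_le s t :
  min_prod 2 (busy p01 p11 w [set i; m] (pair_state i m s t))
  <= outcome_loss e s t (Num.min (busy_next (w j)) rest_min)
       (Num.min (busy_next (w j) * rest_min) (min_prod 2 padded)).
Proof.
case: (boolP (s || t)) => [st | /norP[/negbTE-> /negbTE->]]; last exact: min_prod_both_busy_im_le.
set v := busy _ _ _ _ _.
have v_bounds l : e <= v l <= f by exact: busy_pair_bounds.
have v_ge0 l : 0 <= v l by case/andP: (v_bounds l) => /(le_trans e_ge0).
have vc1 c : v c <= f by case/andP: (v_bounds c).
have vE l : v l = if l == i then (if s then e else f)
    else if l == m then (if t then e else f) else busy_next (w l) by rewrite /v busy_pair.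
clearbody v.
have vj : v j = busy_next (w j) by rewrite vE eq_sym (negbTE ij) (negbTE jm).
have v_rest l : l \notin [set i; j; m] -> v l <= busy_next (w l).
  by rewrite !inE => /norP[/norP[li lj] lm]; rewrite vE (negbTE li) (negbTE lm).
have le_mul_min (c a b z : R) : z <= c * a -> z <= c * b -> z <= c * Num.min a b.
  by move=> za zb; rewrite minEle; case: ifP.
have mi : m != i by rewrite eq_sym.
have mj : m != j by rewrite eq_sym.
case: s t st vE => [] [] // _ vE; rewrite /outcome_loss /=.
- by apply: le_trans (min_prod2_le v im) _; rewrite !vE eqxx (negbTE mi) eqxx.
- apply: le_mul_min.
    by apply: le_trans (min_prod2_le v ij) _; rewrite vj vE eqxx.
  have := min_prod_le_rest_min (_ : i \in _) im (vc1 m) v_ge0 v_rest.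
  by rewrite vE eqxx !inE eqxx; apply.
apply: le_mul_min.
  by apply: le_trans (min_prod2_le v mj) _; rewrite vj vE (negbTE mi) eqxx.
have := min_prod_le_rest_min (_ : m \in _) mi (vc1 i) v_ge0 v_rest.
by rewrite vE (negbTE mi) eqxx !inE eqxx orbT; apply.
Qed.

Lemma opt_loss_exchange : opt_loss p01 p11 w 2 [set i; m] <= opt_loss p01 p11 w 2 [set i; j].
Proof.
have [r_ge r_le] := andP rest_min_bounds.
have p_ge0 : 0 <= min_prod 2 padded.
  apply: le_min_prod2 => // c d _; apply: mulr_ge0;
    exact: le_trans e_ge0 (le_trans r_ge (rest_min_le_padded _)).
rewrite !opt_loss_pair //.
apply: (@le_trans _ _ (pair_loss e (w i) (w m) (Num.min (busy_next (w j)) rest_min)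
  (Num.min (busy_next (w j) * rest_min) (min_prod 2 padded)))).
  rewrite /pair_loss lerD2l; apply: ler_sum => s _; apply: ler_sum => t _.
  by rewrite ler_wpM2l ?mulr_ge0 ?bern_ge0 ?min_prod_sensed_im_le.
have [wj0 _] := andP (w01 j); have [_ wm1] := andP (w01 m).
apply: le_trans (pair_loss_exchange e_ge0 e_le_f f_le1 (w01 i) wj0 wjm wm1 r_ge r_le p_ge0) _.
rewrite /pair_loss lerD2l; apply: ler_sum => s _; apply: ler_sum => t _.
by rewrite ler_wpM2l ?mulr_ge0 ?bern_ge0 ?le_min_prod_sensed_ij.
Qed.

End PairExchange.

Section MyopicFirstAction.
Variables (R : realFieldType) (N : nat) (p01 p11 : R) (w : 'I_N -> R).
Hypotheses (p01_ge0 : 0 <= p01) (p01_le_p11 : p01 <= p11) (p11_le1 : p11 <= 1).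
Hypothesis w01 : forall l, 0 <= w l <= 1.
Variable A : {set 'I_N}.
Hypothesis A_myopic : myopic_action 2 w A.

Local Notation loss := (opt_loss p01 p11 w 2).

Lemma opt_loss_swap c d : c \in A -> d \notin A -> loss A <= loss [set c; d].
Proof.
move=> cA dA; have [A2 A_top] := A_myopic; have [a ca eA] := card2_mem A2 cA.
have aA : a \in A by rewrite eA !inE eqxx orbT.
have cd : c != d by apply: contraNneq dA => <-.
have da : d != a by apply: contraNneq dA => ->.
by rewrite eA; apply: opt_loss_exchange => //; exact: A_top.
Qed.

Lemma myopic_opt_loss_le (B : {set 'I_N}) : #|B| = 2 -> loss A <= loss B.
Proof.
move=> /eqP/cards2P[b1 [b2 [b12 ->]]]; have [A2 A_top] := A_myopic.
case: (boolP (b1 \in A)) => b1A; case: (boolP (b2 \in A)) => b2A.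
- suff -> : A = [set b1; b2] by [].
  apply/eqP; rewrite eq_sym eqEcard A2 cards2 b12 leqnn andbT.
  by apply/subsetP => x; rewrite !inE => /orP[]/eqP->.
- exact: opt_loss_swap.
- by rewrite setUC; exact: opt_loss_swap.
have [a aA] : exists a, a \in A by apply/set0Pn; rewrite -card_gt0 A2.
have b2a : b2 != a by apply: contraNneq b2A => ->.
have b1a : b1 != a by apply: contraNneq b1A => ->.
have b21 : b2 != b1 by rewrite eq_sym.
apply: le_trans (opt_loss_swap aA b2A) _; rewrite setUC [[set b1; b2]]setUC.
by apply: opt_loss_exchange => //; exact: A_top.
Qed.

End MyopicFirstAction.

Theorem theorem1 (R : realFieldType) (N : nat) (p01 p11 : R) (w : 'I_N -> R)
    (A1 : {set 'I_N}) (pi2 : {ffun 'I_N -> bool} -> {set 'I_N}) :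
  (2 <= N)%N ->
  0 <= p01 <= 1 -> 0 <= p11 <= 1 -> p01 <= p11 ->
  (forall i, 0 <= w i <= 1) ->
  admissible_policy 2 A1 pi2 ->
  myopic_policy 2 p01 p11 w A1 pi2 ->
  forall (B1 : {set 'I_N}) (sigma2 : {ffun 'I_N -> bool} -> {set 'I_N}),
    admissible_policy 2 B1 sigma2 ->
    total_reward p01 p11 w B1 sigma2 <= total_reward p01 p11 w A1 pi2.
Proof.
move=> _ p01_01 p11_01 p01_le_p11 w01 A1_adm A1_myopic B1 sigma2 B1_adm.
have [[p01_ge0 _] [_ p11_le1]] := (andP p01_01, andP p11_01).
apply: le_trans (total_reward_le_opt_loss p01 p11 w01 B1_adm) _.
apply: le_trans (myopic_total_reward_ge w01 p01_01 p11_01 A1_adm A1_myopic).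
rewrite lerD2l lerN2; case: B1_adm => B1_2 _.
by apply: myopic_opt_loss_le => //; case: A1_myopic.
Qed.
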